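(* Let $B$ be an $(n,n-1)$-blocker for a convex $n$-gon $C$ with vertices $0,\dots,n-1$ (indices mod $n$). If the ear-cover $(i-1,i+1)$ does not belong to $B$ and $\deg_B(i)=2$, then $B\setminus\{i\}$ is a minimum-sized blocker (a blocker with exactly $(n-1)-2=n-3$ edges) for the $(n-1)$-gon $C\setminus\{i\}$.
   Context: An edge $(i,j)$ is the segment between vertices $i,j$; boundary edges are $(i,i+1)$, diagonals are the other edges. Two edges cross if they share an interior point. A triangulation is a maximal set of pairwise non-crossing diagonals. A blocker is a set $B$ of diagonals having a diagonal in common with every triangulation; it is saturated if for every $e\in B$, $B\setminus\{e\}$ is not a blocker. An $(n,k)$-blocker is a saturated blocker of size $k$ for a convex $n$-gon. Every blocker of a convex $N$-gon has at least $N-2$ edges; those with exactly $N-2$ are minimum-sized. $(i-1,i+1)$ is the ear-cover covering $i$; $\deg_B(i)$ is the number of edges of $B$ incident to $i$. $C\setminus\{i\}$ is the convex polygon obtained by deleting vertex $i$ (so $(i-1,i+1)$ becomes a side), and $B\setminus\{i\}$ is obtained from $B$ by removing all edges incident to $i$ and the edge $(i-1,i+1)$. *)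

From mathcomp Require Import all_boot all_order.
Set Implicit Arguments. Unset Strict Implicit. Unset Printing Implicit Defensive.

(* Vertices of the convex n-gon C are 0..n-1 (type 'I_n) in cyclic order.
   More generally we consider the convex polygon whose vertex set is a
   subset V of 'I_n (cyclic order inherited); C itself is V = [set: 'I_n],
   and C \ {i} is V = [set: 'I_n] :\ i.
   An edge is encoded as a pair (a, b) with a < b. *)
Section Polygon.
Variable n : nat.
Notation vert := ('I_n).
Notation edge := ('I_n * 'I_n)%type.

Definition mkE (a b : vert) : edge := if a < b then (a, b) else (b, a).

(* two edges cross (share an interior point) iff their endpoints strictly
   interleave in the cyclic order *)
Definition cross (e f : edge) : bool :=
  ((e.1 < f.1) && (f.1 < e.2) && (e.2 < f.2)) ||
  ((f.1 < e.1) && (e.1 < f.2) && (f.2 < e.2)).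

(* (a,b) is a diagonal of the convex polygon with vertex set V:
   a, b in V, a < b, and (a,b) is not a side, i.e. there are vertices of V
   strictly on both sides of it. *)
Definition is_diag (V : {set vert}) (e : edge) : bool :=
  [&& e.1 \in V, e.2 \in V, e.1 < e.2,
      [exists v in V, (e.1 < v) && (v < e.2)] &
      [exists w in V, (w < e.1) || (e.2 < w)]].

Definition triangulation (V : {set vert}) (T : {set edge}) : Prop :=
  [/\ {subset T <= is_diag V},
      (forall e f, e \in T -> f \in T -> ~~ cross e f) &
      (forall d, is_diag V d -> d \notin T -> exists2 e, e \in T & cross d e)].

Definition blocker (V : {set vert}) (B : {set edge}) : Prop :=
  {subset B <= is_diag V} /\
  (forall T, triangulation V T -> exists2 e, e \in B & e \in T).

Definition saturated (V : {set vert}) (B : {set edge}) : Prop :=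
  blocker V B /\ (forall e, e \in B -> ~ blocker V (B :\ e)).

Definition nk_blocker (k : nat) (B : {set edge}) : Prop :=
  saturated [set: vert] B /\ #|B| = k.

Lemma vshift_proof (i : vert) (k : nat) : (i + k) %% n < n.
Proof. by apply: ltn_pmod; apply: leq_ltn_trans (ltn_ord i). Qed.
Definition vshift (i : vert) (k : nat) : vert := Ordinal (vshift_proof i k).
Definition vpred (i : vert) : vert := vshift i (n - 1).
Definition vsucc (i : vert) : vert := vshift i 1.

Definition ear (i : vert) : edge := mkE (vpred i) (vsucc i).

Definition deg (B : {set edge}) (i : vert) : nat :=
  #|[set e in B | (e.1 == i) || (e.2 == i)]|.

Definition del_vertex (B : {set edge}) (i : vert) : {set edge} :=
  [set e in B | [&& e.1 != i, e.2 != i & e != ear i]].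
End Polygon.

(* Adding the ear-cover (i-1, i+1) to a triangulation of C \ {i} gives a
   triangulation of C: every diagonal of C at i crosses the ear-cover, and
   every other diagonal of C except the ear-cover itself is a diagonal of
   C \ {i}.  So B meets it, and not in the ear-cover; since the diagonals of
   C \ {i} avoid i, B \ {i} meets the original triangulation.  As the
   ear-cover is not in B, B \ {i} is B minus its two edges at i, leaving
   (n - 1) - 2 = n - 3 edges. *)
From mathcomp Require Import all_boot all_order zify.
Set Implicit Arguments. Unset Strict Implicit. Unset Printing Implicit Defensive.

Lemma crossC n (e f : 'I_n * 'I_n) : cross e f = cross f e.
Proof. by rewrite /cross orbC. Qed.

Lemma is_diag_sub n (V W : {set 'I_n}) (e : 'I_n * 'I_n) :
  V \subset W -> is_diag V e -> is_diag W e.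
Proof.
move=> /subsetP sVW /and5P[e1V e2V lt_e /exists_inP[v vV in_v] /exists_inP[w wV out_w]].
apply/and5P; split; try exact: sVW; first exact: lt_e.
  by apply/exists_inP; exists v; first exact: sVW.
by apply/exists_inP; exists w; first exact: sVW.
Qed.

Lemma is_diag_setD1_neq n (V : {set 'I_n}) (i : 'I_n) (e : 'I_n * 'I_n) :
  is_diag (V :\ i) e -> (e.1 != i) && (e.2 != i).
Proof. by case/and5P; rewrite !inE => /andP[-> _] /andP[-> _]. Qed.

Lemma is_diag_setTE n (e : 'I_n * 'I_n) :
  is_diag [set: 'I_n] e = (e.1.+1 < e.2) && ((0 < e.1) || (e.2.+1 < n)).
Proof.
case: e => a b /=; have b_lt_n := ltn_ord b; rewrite /is_diag !inE /=.
apply/and3P/andP => [[_ /exists_inP[v _ /andP[av vb]] /exists_inP[w _ out_w]]|].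
  by have := ltn_ord w; split; lia.
case=> ab out_ab; have a1_lt_n : a.+1 < n by lia.
split; first lia.
  by apply/exists_inP; exists (Ordinal a1_lt_n); rewrite ?in_setT //= ltnSn.
have [a0|a_gt0] := posnP a; last first.
  by apply/exists_inP; exists (Ordinal (ltn_trans a_gt0 (ltn_ord a))); rewrite ?in_setT //= a_gt0.
have b1_lt_n : b.+1 < n by lia.
by apply/exists_inP; exists (Ordinal b1_lt_n); rewrite ?in_setT //= ltnSn orbT.
Qed.

Lemma exists_in_setD1 n (i : 'I_n) (P : pred nat) (j k : nat) :
  j < n -> k < n -> P j -> P k -> (j != k) || (j != i) ->
  [exists w in [set: 'I_n] :\ i, P w].
Proof.
move=> j_lt_n k_lt_n Pj Pk jk_or_ji.
have [ji|j_neq_i] := eqVneq j i.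
  apply/exists_inP; exists (Ordinal k_lt_n); rewrite // !inE andbT -val_eqE /= -ji.
  by rewrite eq_sym; move: jk_or_ji; rewrite ji eqxx orbF.
by apply/exists_inP; exists (Ordinal j_lt_n); rewrite // !inE andbT -val_eqE.
Qed.

Lemma card_del_vertex n (B : {set 'I_n * 'I_n}) (i : 'I_n) :
  ear i \notin B -> #|del_vertex B i| = #|B| - deg B i.
Proof.
move=> earB; have -> : del_vertex B i = B :\: [set e in B | (e.1 == i) || (e.2 == i)].
  apply/setP => e; rewrite !inE; case: (boolP (e \in B)) => //= eB.
  have -> : e != ear i by apply: contraNneq earB => <-.
  by rewrite negb_or !andbT.
by rewrite cardsD (setIidPr _) //; apply/subsetP => e; rewrite inE => /andP[].
Qed.

Section EarCover.
Variables (n : nat) (i : 'I_n).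

Lemma val_vpred : vpred i = (if i == 0 :> nat then n.-1 else i.-1) :> nat.
Proof.
rewrite /vpred /vshift /=; have := ltn_ord i.
case: eqP => [-> | i_neq0] i_lt_n; first by rewrite add0n modn_small; lia.
by rewrite (_ : i + (n - 1) = i.-1 + n) ?modnDr ?modn_small; lia.
Qed.

Lemma val_vsucc : vsucc i = (if i == n.-1 :> nat then 0 else i.+1) :> nat.
Proof.
rewrite /vsucc /vshift /=; have := ltn_ord i.
case: eqP => [i_last | i_nlast] i_lt_n; last by rewrite modn_small; lia.
by rewrite (_ : i + 1 = n) ?modnn; lia.
Qed.

Hypothesis n_gt2 : 2 < n.

Lemma earE :
  (0 < i < n.-1 /\ (ear i).1 = i.-1 :> nat /\ (ear i).2 = i.+1 :> nat) \/
  (i = 0 :> nat /\ (ear i).1 = 1 :> nat /\ (ear i).2 = n.-1 :> nat) \/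
  (i = n.-1 :> nat /\ (ear i).1 = 0 :> nat /\ (ear i).2 = n.-2 :> nat).
Proof.
have := ltn_ord i; move: val_vpred val_vsucc; rewrite /ear /mkE.
case: (nat_of_ord i =P 0); case: (nat_of_ord i =P n.-1);
  by move: (vpred i) (vsucc i) => p s; case: ifP => /=; lia.
Qed.

Lemma ear_diag : 3 < n -> is_diag [set: 'I_n] (ear i).
Proof. by have := earE; rewrite is_diag_setTE; lia. Qed.

Lemma ear_noncross (e : 'I_n * 'I_n) : e.1 != i -> e.2 != i -> ~~ cross e (ear i).
Proof.
have := earE; case: (ear i) e => [x y] [a b] /= ear_xy.
by have := ltn_ord b; rewrite -!val_eqE /cross /=; lia.
Qed.

Lemma cross_ear_incident (d : 'I_n * 'I_n) :
  is_diag [set: 'I_n] d -> (d.1 == i) || (d.2 == i) -> cross d (ear i).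
Proof.
have := earE; case: (ear i) d => [x y] [a b] /= ear_xy.
by have := ltn_ord b; rewrite is_diag_setTE -!val_eqE /cross /=; lia.
Qed.

Lemma is_diag_setD1 (e : 'I_n * 'I_n) :
  is_diag [set: 'I_n] e -> e.1 != i -> e.2 != i -> e != ear i ->
  is_diag ([set: 'I_n] :\ i) e.
Proof.
have := earE; case: (ear i) e => [x y] [a b] /= ear_xy.
rewrite is_diag_setTE xpair_eqE -!val_eqE /= => /andP[ab out_ab] a_neq_i b_neq_i not_ear.
have b_lt_n := ltn_ord b.
rewrite /is_diag !inE -!val_eqE /= a_neq_i b_neq_i (ltnW ab) /=.
(* The neighbours of [a] and [b] on each side coincide only when [e] is the
   ear-cover of that common neighbour. *)
apply/andP; split.
  by apply: (@exists_in_setD1 _ _ (fun v => a < v < b) a.+1 b.-1); lia.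
apply: (@exists_in_setD1 _ _ (fun w => (w < a) || (b < w))
         (if 0 < a then a.-1 else n.-1) (if b.+1 < n then b.+1 else 0));
  by repeat case: ifP; lia.
Qed.

Lemma triangulation_add_ear (T : {set 'I_n * 'I_n}) :
  3 < n -> triangulation ([set: 'I_n] :\ i) T -> triangulation [set: 'I_n] (ear i |: T).
Proof.
move=> n_gt3 [T_diag T_noncross T_max].
have T_avoid e : e \in T -> (e.1 != i) && (e.2 != i).
  by move=> eT; apply: is_diag_setD1_neq (T_diag e eT).
split.
- move=> e; rewrite !inE => /predU1P[-> | eT]; first exact: ear_diag.
  exact: is_diag_sub (subsetT _) (T_diag e eT).
- move=> e f; rewrite !inE => /predU1P[->|eT] /predU1P[->|fT].
  + by rewrite /cross !ltnn.
  + by rewrite crossC; case/andP: (T_avoid f fT); apply: ear_noncross.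
  + by case/andP: (T_avoid e eT); apply: ear_noncross.
  + exact: T_noncross.
- move=> d d_diag; rewrite !inE negb_or => /andP[d_ear dT].
  case: (boolP ((d.1 == i) || (d.2 == i))) => [d_at_i | ].
    by exists (ear i); [rewrite !inE eqxx | exact: cross_ear_incident].
  rewrite negb_or => /andP[d1 d2].
  have [e eT de] := T_max d (is_diag_setD1 d_diag d1 d2 d_ear) dT.
  by exists e; rewrite // !inE eT orbT.
Qed.

Lemma blocker_del_vertex (B : {set 'I_n * 'I_n}) :
  3 < n -> blocker [set: 'I_n] B -> ear i \notin B ->
  blocker ([set: 'I_n] :\ i) (del_vertex B i).
Proof.
move=> n_gt3 [B_diag B_meet] earB; split.
  move=> e; rewrite inE => /andP[eB /and3P[e1 e2 e_ear]].
  exact: is_diag_setD1 (B_diag e eB) e1 e2 e_ear.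
move=> T T_tri; have [T_diag _ _] := T_tri.
have [e eB] := B_meet _ (triangulation_add_ear n_gt3 T_tri).
rewrite !inE => /predU1P[e_ear | eT]; first by rewrite -e_ear eB in earB.
exists e => //; rewrite inE eB.
case/andP: (is_diag_setD1_neq (T_diag e eT)) => -> -> /=.
by apply: contraNneq earB => <-.
Qed.

End EarCover.

Theorem mainTheorem12 (n : nat) (B : {set 'I_n * 'I_n}) (i : 'I_n) :
  3 <= n ->
  nk_blocker (n - 1) B ->
  ear i \notin B ->
  deg B i = 2 ->
  blocker ([set: 'I_n] :\ i) (del_vertex B i) /\ #|del_vertex B i| = n - 3.
Proof.
move=> n_gt2 [[B_blocker _] card_B] earB deg_i.
have n_gt3 : 3 < n.
  have [[a b] eB] : exists e, e \in B by apply/set0Pn; rewrite -card_gt0 card_B; lia.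
  have ab_diag : is_diag [set: 'I_n] (a, b) := B_blocker.1 _ eB.
  by have := ltn_ord b; move: ab_diag; rewrite is_diag_setTE /=; lia.
split; first exact: blocker_del_vertex.
by rewrite card_del_vertex // card_B deg_i; lia.
Qed.
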